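(* For every tree $T$ of order $n\ge 2$, $\sigma_t(T)\le (n-2)\,\sigma(T)$. Equality holds if and only if $T$ is the path $P_n$. Equivalently, if $\Delta(T)\ge 3$ then $\sigma_t(T)<(n-2)\sigma(T)$.
   Context: For a graph $G=(V,E)$ with vertex degrees $d(\cdot)$: $\sigma(G)=\sum_{uv\in E}(d(u)-d(v))^2$ (sum over edges) and $\sigma_t(G)=\sum_{\{u,v\}\subseteq V}(d(u)-d(v))^2$ (sum over all unordered pairs of distinct vertices). $\Delta(T)$ is the maximum degree and $P_n$ is the path on $n$ vertices. *)

From mathcomp Require Import all_boot all_order all_algebra.
Set Implicit Arguments. Unset Strict Implicit. Unset Printing Implicit Defensive.
Import Order.TTheory GRing.Theory Num.Theory.

Section Graphs.
Variable T : finType.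

Definition simple_graph (e : rel T) : Prop := symmetric e /\ irreflexive e.

Definition deg (e : rel T) (x : T) : nat := #|[set y | e x y]|.

Definition maxdeg (e : rel T) : nat := \max_(x : T) deg e x.

Definition connected_graph (e : rel T) : Prop := forall x y : T, connect e x y.

(* acyclic: every cycle of pairwise distinct vertices has at most 2 vertices
   (a "cycle" of 2 vertices x,y is just the edge xy traversed back and forth) *)
Definition acyclic (e : rel T) : Prop :=
  forall c : seq T, uniq c -> cycle e c -> size c < 3.

Definition is_tree (e : rel T) : Prop :=
  simple_graph e /\ connected_graph e /\ acyclic e.

Definition sigma (e : rel T) : int :=
  \sum_(x : T) \sum_(y : T | (enum_rank x < enum_rank y)%N && e x y)
     ((deg e x)%:Z - (deg e y)%:Z) ^+ 2.

Definition sigma_t (e : rel T) : int :=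
  \sum_(x : T) \sum_(y : T | (enum_rank x < enum_rank y)%N)
     ((deg e x)%:Z - (deg e y)%:Z) ^+ 2.

Definition is_path_graph (e : rel T) : Prop :=
  exists f : T -> 'I_#|T|, bijective f /\
    forall x y : T, e x y = ((f x).+1 == f y) || ((f y).+1 == f x).

End Graphs.

(* Write n = #|T|, d for the degree and Δ for the maximum degree.  In a tree
   Σ d = 2n - 2 and σ_t = n Σ d² - (Σ d)².  For 0 <= t <= Δ the vertices of
   degree at least t induce a forest, so the sum of their degrees is at most
   2 (#vertices - 1) plus the number of edges leaving the set.  An edge uv
   leaves the set for exactly |d u - d v| thresholds t, so, writing L >= 0 for
   the total slack of these forest bounds, summing over t gives
     Σ d (d + 1) + 2 (Δ + 1) + L = 2 Σ (d + 1) + Σ_{uv ∈ E} |d u - d v|.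
   Eliminating Σ d² and Σ d yields the identity
     (n - 2) σ - σ_t
       = (n - 2)(σ - Σ_E |d u - d v|) + (n - 2) L + 2 Σ (d - 1)(Δ - d),
   all of whose terms are nonnegative.  If Δ >= 3, either some vertex has
   1 < d < Δ, or a leaf is adjacent to a vertex of degree Δ and
   |d u - d v| < (d u - d v)² on that edge.  If Δ <= 2 the tree is a path,
   with σ <= 2 and σ_t = 2 (n - 2). *)

From mathcomp Require Import all_boot all_order all_algebra.
From mathcomp Require Import zify ring.
Set Implicit Arguments.
Unset Strict Implicit.
Unset Printing Implicit Defensive.
Import Order.TTheory GRing.Theory Num.Theory.

Lemma sum_ord_leq b m : \sum_(t < m) (t <= b) = minn b.+1 m.
Proof.
elim: m => [|m IHm]; first by rewrite big_ord0 minn0.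
by rewrite big_ord_recr /= IHm; case: leqP => /=; lia.
Qed.

Lemma sum_ord_between a b m :
  \sum_(t < m) (a < t <= b) = minn b.+1 m - minn a.+1 m.
Proof.
elim: m => [|m IHm]; first by rewrite big_ord0 !minn0.
by rewrite big_ord_recr /= IHm; case: (ltnP a m); case: leqP => /=; lia.
Qed.

Section Sums.
Variable T : finType.
Local Open Scope ring_scope.

Lemma card_xpredT : #|(xpredT : pred T)| = #|T|.
Proof. exact: eq_card. Qed.

Lemma Posz_sum (I : Type) (r : seq I) (P : pred I) (F : I -> nat) :
  (\sum_(i <- r | P i) F i)%N%:Z = \sum_(i <- r | P i) (F i)%:Z.
Proof. exact: (big_morph Posz PoszD (erefl (Posz 0))). Qed.

Lemma psumr_gt0 (R : numDomainType) (I : finType) (P : pred I) (F : I -> R) i :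
  (forall j, P j -> 0 <= F j) -> P i -> 0 < F i -> 0 < \sum_(j | P j) F j.
Proof.
move=> F_ge0 Pi Fi_gt0; rewrite (bigD1 i) //= (lt_le_trans Fi_gt0) // lerDl.
by apply: sumr_ge0 => j /andP[/F_ge0].
Qed.

Lemma normz_le_sqr (z : int) : `|z| <= z ^+ 2.
Proof. rewrite expr2; nia. Qed.

Lemma normz_lt_sqr (z : int) : 1 < `|z| -> `|z| < z ^+ 2.
Proof. rewrite expr2; nia. Qed.

Lemma sum_sym_pairs (R : nmodType) (P : rel T) (F : T -> T -> R) :
  symmetric P -> irreflexive P -> (forall x y, F x y = F y x) ->
  \sum_x \sum_(y | P x y) F x y =
  (\sum_x \sum_(y | (enum_rank x < enum_rank y)%N && P x y) F x y) *+ 2.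
Proof.
move=> Psym Pirr Fsym.
have split_x x : \sum_(y | P x y) F x y =
    \sum_(y | (enum_rank x < enum_rank y)%N && P x y) F x y +
    \sum_(y | (enum_rank y < enum_rank x)%N && P y x) F y x.
  rewrite (bigID (fun y => enum_rank x < enum_rank y)%N) /=; congr (_ + _).
    by apply: eq_bigl => y; rewrite andbC.
  apply: eq_big => [y|y _]; last exact: Fsym.
  rewrite Psym; have [Pyx|] := boolP (P y x); rewrite ?andbF ?andbT //.
  rewrite -leqNgt leq_eqVlt orbC; case: ltnP => //= _.
  by apply/negP => /eqP/val_inj/enum_rank_inj yx; rewrite yx Pirr in Pyx.
rewrite (eq_bigr _ (fun x _ => split_x x)) big_split /= mulr2n.
by rewrite [X in _ + X](exchange_big_dep predT).
Qed.

Lemma sum_pairs_sqr_diff (a : T -> int) :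
  \sum_x \sum_(y | (enum_rank x < enum_rank y)%N) (a x - a y) ^+ 2 =
  #|T|%:Z * \sum_x a x ^+ 2 - (\sum_x a x) ^+ 2.
Proof.
apply/eqP; rewrite -(eqr_pMn2r (isT : (0 < 2)%N)); apply/eqP.
have all_pairs : \sum_x \sum_y (a x - a y) ^+ 2 =
    \sum_x \sum_(y | x != y) (a x - a y) ^+ 2.
  apply: eq_bigr => x _; rewrite (bigD1 x) //= subrr expr0n add0r.
  by apply: eq_bigl => y; rewrite eq_sym.
transitivity (\sum_x \sum_y (a x - a y) ^+ 2); last first.
  under eq_bigr do under eq_bigr do rewrite sqrrB.
  under eq_bigr => x _ do
    rewrite 2!big_split /= sumrN sumr_const sumrMnl -mulr_sumr.
  rewrite 2!big_split /= sumrN sumr_const sumrMnl sumrMnl -mulr_suml.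
  rewrite card_xpredT; ring.
rewrite all_pairs (@sum_sym_pairs _ (fun x y => x != y)) => [||x|x y].
- congr (_ *+ _); apply: eq_bigr => x _; apply: eq_bigl => y.
  by rewrite andb_idr // => lt_xy; apply: contraTneq lt_xy => ->; rewrite ltnn.
- by move=> x y; rewrite eq_sym.
- by rewrite eqxx.
- by rewrite -sqrrN opprB.
Qed.

End Sums.

Section Graph.
Variables (T : finType) (e : rel T).
Hypotheses (esym : symmetric e) (eirr : irreflexive e).
Local Notation d x := (deg e x).

Definition deg_in (U : {set T}) x := #|[set y in U | e x y]|.
Definition degsum_in (U : {set T}) := \sum_(x in U) deg_in U x.

Lemma deg_inT x : deg_in setT x = d x.
Proof. by apply: eq_card => y; rewrite !inE. Qed.

Lemma degsum_in_setD1 (U : {set T}) x :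
  x \in U -> degsum_in U = degsum_in (U :\ x) + 2 * deg_in U x.
Proof.
move=> Ux; rewrite /degsum_in (big_setD1 _ Ux) /=.
have deg_in_D1 y : deg_in U y = deg_in (U :\ x) y + e y x.
  rewrite /deg_in (cardsD1 x [set z in U | e y z]) !inE Ux addnC; congr (_ + _).
  by apply: eq_card => z; rewrite !inE andbA.
rewrite (eq_bigr _ (fun y _ => deg_in_D1 y)) big_split /=.
have -> : \sum_(y in U :\ x) e y x = deg_in U x.
  rewrite /deg_in -sum1_card big_mkcond [RHS]big_mkcond; apply: eq_bigr => y _.
  rewrite !inE esym; case: eqVneq => [->|_]; first by rewrite eirr andbF.
  by case: (y \in U); case: (e x y).
lia.
Qed.

Lemma sum_deg_split (U : {set T}) :
  \sum_(x in U) d x = degsum_in U + \sum_(x in U) #|[set y | e x y] :\: U|.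
Proof.
rewrite /degsum_in -big_split /=; apply: eq_bigr => x _.
rewrite /deg -(cardsID U [set y | e x y]) /deg_in; congr (_ + _).
by apply: eq_card => y; rewrite !inE andbC.
Qed.

Lemma connect_exit_edge (A : {set T}) x z :
  x \in A -> z \notin A -> connect e x z ->
  exists a b, [/\ a \in A, b \notin A & e a b].
Proof.
move=> xA zA /connectP[p p_path z_last]; subst z.
elim: p x xA p_path zA => [|y p IHp] x xA /=; first by rewrite xA.
case/andP=> exy p_path zA; have [yA|yA] := boolP (y \in A).
  exact: IHp p_path zA.
by exists x, y.
Qed.

Definition simple_path_in (U : {set T}) (s : seq T) :=
  [&& uniq s, sorted e s & all [in U] s].

Definition longest_path_in (U : {set T}) (s : seq T) :=
  simple_path_in U s /\
  forall s', simple_path_in U s' -> size s' <= size s.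

Lemma exists_longest_path_in (U : {set T}) x0 :
  x0 \in U -> exists x p, longest_path_in U (x :: p).
Proof.
move=> x0U; have path_x0 : simple_path_in U [:: x0].
  by rewrite /simple_path_in /= x0U.
pose has_path k := [exists s : k.-tuple T, simple_path_in U s].
have has_path1 : has_path 1 by apply/existsP; exists [tuple x0].
have has_path_le k : has_path k -> k <= #|T|.
  case/existsP=> s /and3P[uniq_s _ _].
  by rewrite -(size_tuple s) -(card_uniqP uniq_s) max_card.
have [k /existsP[s path_s] max_k] :=
  ex_maxnP (ex_intro _ 1 has_path1) has_path_le.
have longest_s : longest_path_in U s.
  split=> // s' path_s'; rewrite size_tuple.
  by apply: max_k; apply/existsP; exists (in_tuple s').
case: (tval s) longest_s => [|x p] longest_s; last by exists x, p.
by have := longest_s.2 _ path_x0.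
Qed.

Lemma longest_path_in_rev (U : {set T}) s :
  longest_path_in U (rev s) <-> longest_path_in U s.
Proof.
have path_rev s' : simple_path_in U (rev s') = simple_path_in U s'.
  rewrite /simple_path_in rev_uniq all_rev; congr [&& _, _ & _].
  rewrite -[RHS]rev_sorted; case: (rev s') => //= x p.
  by apply: eq_path => y z; rewrite esym.
by rewrite /longest_path_in path_rev size_rev.
Qed.

Lemma longest_path_in_head (U : {set T}) x p y :
  longest_path_in U (x :: p) -> y \in U -> e x y -> y \in x :: p.
Proof.
case=> /and3P[uniq_xp sorted_xp all_xp] longest yU exy.
apply: contraT => y_notin.
suff /longest : simple_path_in U [:: y, x & p] by rewrite ltnn.
apply/and3P; split; first by rewrite cons_uniq y_notin.
  by rewrite /= esym exy; exact: sorted_xp.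
by rewrite /= yU.
Qed.

Hypothesis acyc : acyclic e.

Lemma acyclic_no_chord x0 s i j :
  uniq s -> sorted e s -> i.+2 <= j < size s -> ~~ e (nth x0 s j) (nth x0 s i).
Proof.
move=> uniq_s sorted_s /andP[lt_ij lt_js]; apply/negP => e_ji.
have uniq_c := drop_uniq i (take_uniq j.+1 uniq_s).
have sorted_c := drop_sorted i (take_sorted j.+1 sorted_s).
have nth_c k : k <= j - i -> nth x0 (drop i (take j.+1 s)) k = nth x0 s (i + k).
  by move=> le_k; rewrite nth_drop nth_take //; lia.
have := congr1 size (erefl (drop i (take j.+1 s))).
rewrite {2}size_drop size_takel //.
case: (drop i _) uniq_c sorted_c nth_c
  => [|a p] uniq_c sorted_c nth_c /= size_p.
  by move: size_p; lia.
suff cyc : cycle e (a :: p) by move: (acyc uniq_c cyc); rewrite /= size_p; lia.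
rewrite /= rcons_path; apply/andP; split; first exact: sorted_c.
have a_i : a = nth x0 s i by rewrite -[i]addn0 -nth_c.
have last_j : last a p = nth x0 s j.
  have size_ji : size p = j - i by apply: succn_inj; rewrite size_p; lia.
  by rewrite (last_nth x0) size_ji nth_c // subnKC //; lia.
by rewrite last_j a_i.
Qed.

Lemma acyclic_sorted_edge x0 s i j :
  uniq s -> sorted e s -> i < size s -> j < size s ->
  e (nth x0 s i) (nth x0 s j) = (i.+1 == j) || (j.+1 == i).
Proof.
move=> uniq_s sorted_s lt_is lt_js; apply/idP/idP => [e_ij|]; last first.
  have /(sortedP x0) step := sorted_s.
  case/orP=> /eqP next; first by rewrite -next step // next.
  by rewrite -next esym step // next.
have [lt_ij|lt_ji|eq_ij] := ltngtP i j; last by rewrite eq_ij eirr in e_ij.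
  apply: contraTT e_ij; rewrite negb_or => /andP[not_next _]; rewrite esym.
  by apply: acyclic_no_chord => //; rewrite lt_js andbT; lia.
apply: contraTT e_ij; rewrite negb_or => /andP[_ not_next].
by apply: acyclic_no_chord => //; rewrite lt_is andbT; lia.
Qed.

Lemma exists_leaf_in (U : {set T}) :
  U != set0 -> exists2 x, x \in U & deg_in U x <= 1.
Proof.
case/set0Pn=> x0 /exists_longest_path_in[x [p longest]].
have [/and3P[uniq_xp sorted_xp /andP[xU _]] _] := longest.
exists x => //; rewrite -(cards1 (nth x p 0)).
apply/subset_leq_card/subsetP => y; rewrite !inE => /andP[yU exy].
have yp := longest_path_in_head longest yU exy.
have : e (nth x (x :: p) 0) (nth x (x :: p) (index y (x :: p))).
  by rewrite nth_index.
rewrite acyclic_sorted_edge ?index_mem // => /orP[/eqP index_y|//].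
by rewrite -(nth_index x yp) -index_y.
Qed.

Lemma forest_degsum_in (U : {set T}) :
  U != set0 -> degsum_in U <= 2 * (#|U| - 1).
Proof.
move card_U : #|U| => k; elim: k U card_U => [|k IHk] U card_U U_neq0.
  by move: U_neq0; rewrite -card_gt0 card_U.
have [x xU leaf_x] := exists_leaf_in U_neq0.
have card_Ux : #|U :\ x| = k.
  by move: card_U; rewrite (cardsD1 x) xU add1n => -[].
rewrite (degsum_in_setD1 xU).
have [Ux0|Ux_neq0] := eqVneq (U :\ x) set0; last first.
  have k_gt0 : 0 < k by rewrite -card_Ux card_gt0.
  by have := IHk _ card_Ux Ux_neq0; lia.
have -> : deg_in U x = 0.
  apply/eqP; rewrite cards_eq0 -subset0 -Ux0; apply/subsetP => y.
  rewrite !inE => /andP[-> exy]; rewrite andbT.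
  by apply: contraTneq exy => ->; rewrite eirr.
by rewrite /degsum_in Ux0 big_set0.
Qed.

Hypothesis conn : connected_graph e.

Lemma deg_gt0 x : 1 < #|T| -> 0 < d x.
Proof.
move=> T_gt1; have : 0 < #|[set~ x]| by rewrite cardsC1 -subn1 subn_gt0.
case/card_gt0P=> y; rewrite !inE => y_neq_x.
have y_notin : y \notin [set x] by rewrite inE.
have [a [b [/set1P -> _ exb]]] :=
  connect_exit_edge (set11 x) y_notin (conn x y).
by apply/card_gt0P; exists b; rewrite inE.
Qed.

Lemma connected_degsum_in_ge k :
  k < #|T| -> exists U : {set T}, #|U| = k.+1 /\ 2 * k <= degsum_in U.
Proof.
elim: k => [|k IHk] lt_kT.
  by have [x _] := card_gt0P lt_kT; exists [set x]; rewrite cards1.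
have [U [card_U degsum_U]] := IHk (ltnW lt_kT).
have /subsetPn[z _ zU] : ~~ ([set: T] \subset U).
  by apply: contraTN lt_kT => /subset_leq_card; rewrite cardsT card_U; lia.
have [x xU] : exists x, x \in U by apply/card_gt0P; rewrite card_U.
have [a [b [aU bU eab]]] := connect_exit_edge xU zU (conn x z).
exists (b |: U); split; first by rewrite cardsU1 bU card_U.
rewrite (degsum_in_setD1 (setU11 b U)) setU1K //.
have : 0 < deg_in (b |: U) b.
  by apply/card_gt0P; exists a; rewrite !inE aU orbT esym.
lia.
Qed.

Lemma tree_sum_deg : 0 < #|T| -> \sum_x d x = 2 * (#|T| - 1).
Proof.
move=> T_gt0; have <- : degsum_in setT = \sum_x d x.
  by apply: eq_big => x; rewrite ?inE ?deg_inT.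
have T_neq0 : [set: T] != set0 by rewrite -card_gt0 cardsT.
apply/eqP; rewrite eqn_leq (leq_trans (forest_degsum_in T_neq0)) ?cardsT //=.
have := @connected_degsum_in_ge #|T|.-1; rewrite ltn_predL.
case=> // U [card_U degsum_U].
have UT : U = setT by apply/eqP; rewrite eqEcard subsetT cardsT card_U; lia.
by rewrite -UT subn1.
Qed.

Lemma deg_le_maxdeg x : d x <= maxdeg e.
Proof. exact: (leq_bigmax (F := fun x => deg e x)). Qed.

Lemma exists_maxdeg : 0 < #|T| -> exists x, d x = maxdeg e.
Proof. by case/(bigop.eq_bigmax (fun x => deg e x)) => x; exists x. Qed.

Lemma maxdeg_lt_card : 0 < #|T| -> maxdeg e < #|T|.
Proof.
move=> T_gt0; have [x <-] := exists_maxdeg T_gt0.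
rewrite -(prednK T_gt0) ltnS -(cardsC1 x); apply/subset_leq_card/subsetP => y.
by rewrite !inE; apply: contraTneq => ->; rewrite eirr.
Qed.

Lemma deg_ge2 x a b : a != b -> e x a -> e x b -> 1 < d x.
Proof.
move=> neq_ab exa exb; have <- : #|[set a; b]| = 2 by rewrite cards2 neq_ab.
by apply/subset_leq_card/subsetP => y; rewrite !inE => /orP[] /eqP ->.
Qed.

Lemma tree_mid_deg_or_steep_edge : 1 < #|T| -> 3 <= maxdeg e ->
  (exists x, 1 < d x < maxdeg e) \/ (exists u v, e u v /\ d v + 2 <= d u).
Proof.
move=> T_gt1 Delta_ge3.
have [/existsP[x mid_x]|/existsPn no_mid] :=
  boolP [exists x, 1 < d x < maxdeg e].
  by left; exists x.
right; have [w dw] := exists_maxdeg (ltnW T_gt1).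
have extreme y : d y = 1 \/ d y = maxdeg e.
  by have := no_mid y; have := deg_gt0 y T_gt1; have := deg_le_maxdeg y; lia.
have setT_neq0 : [set: T] != set0 by rewrite -card_gt0 cardsT ltnW.
have [l _] := exists_leaf_in setT_neq0; rewrite deg_inT => leaf_l.
have dl : d l = 1 by have := deg_gt0 l T_gt1; lia.
have [u] : exists u, u \in [set y | e l y] by apply/card_gt0P; exact: deg_gt0.
rewrite inE => elu; exists u, l; rewrite esym elu; split => //.
have [du|->] := extreme u; last by rewrite dl.
have l_in : l \in [set l; u] by rewrite !inE eqxx.
have w_notin : w \notin [set l; u].
  rewrite !inE negb_or.
  apply/andP; split; apply: contraTneq Delta_ge3 => w_eq.
    by rewrite -dw w_eq dl.
  by rewrite -dw w_eq du.
have [a [b [a_in b_notin eab]]] := connect_exit_edge l_in w_notin (conn l w).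
move: a_in b_notin eab; rewrite !inE negb_or.
move=> /orP[] /eqP -> /andP[nbl nbu] eab.
  by have := deg_ge2 _ elu eab; rewrite dl eq_sym nbu => /(_ isT).
have eul : e u l by rewrite esym.
by have := deg_ge2 _ eul eab; rewrite du eq_sym nbl => /(_ isT).
Qed.

Lemma path_graph_maxdeg_le2 : is_path_graph e -> maxdeg e <= 2.
Proof.
case=> f [f_bij f_e]; apply/bigmax_leqP => x _.
have f_inj : injective (fun y => nat_of_ord (f y)).
  by move=> y z /val_inj; apply: bij_inj.
have fiber_le1 (g : T -> nat) k : injective g -> #|[set y | g y == k]| <= 1.
  move=> g_inj; apply/card_le1_eqP => y z; rewrite !inE => /eqP gy /eqP gz.
  by apply: g_inj; rewrite gy gz.
have sub : [set y | e x y] \subset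
    [set y | nat_of_ord (f y) == (f x).+1] :|: [set y | (f y).+1 == f x].
  by apply/subsetP => y; rewrite !inE f_e eq_sym.
have := subset_leq_card sub; rewrite cardsU.
have := fiber_le1 _ (f x).+1 f_inj.
have := fiber_le1 (fun y => (f y).+1) (f x)
  (fun y z yz => f_inj y z (succn_inj yz)).
rewrite /deg; lia.
Qed.

Lemma maxdeg_le2_longest_path_closed s x y : maxdeg e <= 2 ->
  longest_path_in setT s -> x \in s -> e x y -> y \in s.
Proof.
move=> Delta_le2 longest xs exy; have yT := in_setT y.
case/splitPr: xs longest => s1 s2; case/lastP: s1 => [|s1 a] longest.
  exact: longest_path_in_head longest yT exy.
case: s2 longest => [|b s2] longest.
  move/longest_path_in_rev: longest; rewrite rev_cat /= => longest.
  have := longest_path_in_head longest yT exy.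
  by rewrite !(mem_cat, mem_rev, inE) orbC.
have [/and3P[uniq_s sorted_s _] _] := longest.
move: sorted_s; rewrite cat_rcons sorted_cat_cons.
move=> /andP[/= _] /and3P[eax exb _].
move: uniq_s; rewrite cat_rcons cat_uniq /= => /and5P[_ _ a_notin _ _].
have neq_ab : a != b by apply: contraNneq a_notin => ->; rewrite !inE eqxx orbT.
have N_x : [set z | e x z] = [set a; b].
  apply/eqP; rewrite eq_sym eqEcard cards2 neq_ab; apply/andP; split.
    by apply/subsetP => z; rewrite !inE => /orP[] /eqP ->; rewrite // esym.
  exact: leq_trans (deg_le_maxdeg x) Delta_le2.
have : y \in [set a; b] by rewrite -N_x inE.
by rewrite !inE mem_cat !inE => /orP[] ->; rewrite !orbT.
Qed.

Lemma closed_seq_full (s : seq T) x :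
  x \in s -> (forall u v, u \in s -> e u v -> v \in s) -> forall z, z \in s.
Proof.
move=> xs s_closed z; apply: contraT => zs.
have xA : x \in [set u | u \in s] by rewrite inE.
have zA : z \notin [set u | u \in s] by rewrite inE.
have [a [b [aA bA eab]]] := connect_exit_edge xA zA (conn x z).
by move: aA bA; rewrite !inE => /s_closed/(_ eab) ->.
Qed.

Lemma spanning_path_graph s :
  uniq s -> sorted e s -> (forall z, z \in s) -> is_path_graph e.
Proof.
move=> uniq_s sorted_s s_full.
have size_s : size s = #|T| by rewrite -(card_uniqP uniq_s); apply: eq_card.
have index_lt x : index x s < #|T| by rewrite -size_s index_mem.
exists (fun x => Ordinal (index_lt x)); split.
  apply: inj_card_bij; last by rewrite card_ord.
  by move=> x y /(congr1 val) /= /(congr1 (nth x s)); rewrite !nth_index.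
move=> x y /=; rewrite -[in LHS](nth_index x (s_full x)).
by rewrite -[in LHS](nth_index x (s_full y)) acyclic_sorted_edge ?index_mem.
Qed.

Lemma tree_maxdeg_le2_path : 0 < #|T| -> maxdeg e <= 2 -> is_path_graph e.
Proof.
case/card_gt0P=> x0 _ Delta_le2.
have [x [p longest]] := exists_longest_path_in (in_setT x0).
have [/and3P[uniq_s sorted_s _] _] := longest.
apply: (spanning_path_graph uniq_s sorted_s).
apply: (closed_seq_full (mem_head x p)) => u v.
exact: maxdeg_le2_longest_path_closed.
Qed.

Definition level t := [set x | t <= d x].

(* Truncated subtraction: each edge uv is counted once, with |d u - d v|. *)
Definition deg_gap := \sum_x \sum_(y | e x y) (d x - d y).

Lemma sum_levels (f : T -> nat) :
  \sum_(t < (maxdeg e).+1) \sum_(x in level t) f x = \sum_x (d x).+1 * f x.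
Proof.
rewrite (eq_bigr (fun t : 'I_(maxdeg e).+1 => \sum_x (t <= d x) * f x)).
  rewrite exchange_big; apply: eq_bigr => x _.
  by rewrite -big_distrl sum_ord_leq (minn_idPl _) // ltnS deg_le_maxdeg.
move=> t _; rewrite big_mkcond; apply: eq_bigr => x _.
by rewrite inE; case: (_ <= _); rewrite (mul1n, mul0n).
Qed.

Lemma sum_level_boundaries :
  \sum_(t < (maxdeg e).+1) \sum_(x in level t) #|[set y | e x y] :\: level t|
  = deg_gap.
Proof.
rewrite (eq_bigr (fun t : 'I_(maxdeg e).+1 =>
                    \sum_x \sum_(y | e x y) (d y < t <= d x))).
  rewrite exchange_big; apply: eq_bigr => x _.
  rewrite exchange_big; apply: eq_bigr => y _.
  by rewrite sum_ord_between !(minn_idPl _) // ltnS deg_le_maxdeg.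
move=> t _; rewrite big_mkcond; apply: eq_bigr => x _; rewrite inE.
case: leqP => _; last by rewrite big1 // => y _; rewrite andbF.
rewrite -sum1_card big_mkcond [RHS]big_mkcond; apply: eq_bigr => y _.
by rewrite !inE andbT -ltnNge andbC; case: (e x y); case: (d y < t).
Qed.

Lemma sum_level_card : \sum_(t < (maxdeg e).+1) #|level t| = \sum_x (d x).+1.
Proof.
rewrite (eq_bigr (fun t : 'I_(maxdeg e).+1 => \sum_(x in level t) 1)).
  by rewrite sum_levels; apply: eq_bigr => x _; rewrite muln1.
by move=> t _; rewrite sum1_card.
Qed.

Lemma sum_level_degsum :
  \sum_(t < (maxdeg e).+1) degsum_in (level t) + deg_gap
  = \sum_x (d x).+1 * d x.
Proof.
rewrite -sum_level_boundaries -big_split -sum_levels /=.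
by apply: eq_bigr => t _; rewrite sum_deg_split.
Qed.

Lemma level_neq0 t : 0 < #|T| -> t <= maxdeg e -> level t != set0.
Proof.
by case/exists_maxdeg=> x dx le_t; apply/set0Pn; exists x; rewrite inE dx.
Qed.

Local Open Scope ring_scope.
Local Notation n := (#|T|%:Z).
Local Notation D := (\sum_x (d x)%:Z).
Local Notation Q := (\sum_x (d x)%:Z ^+ 2).
Local Notation Delta := ((maxdeg e)%:Z).

(* An induced forest with c components on [level t] has #|level t| - c edges,
   so the summand for t is 2 (c - 1). *)
Definition level_defect : int :=
  \sum_(t < (maxdeg e).+1) (2 * (#|level t|%:Z - 1) - (degsum_in (level t))%:Z).

Definition deg_spread : int := \sum_x ((d x)%:Z - 1) * (Delta - (d x)%:Z).

Lemma level_defect_ge0 : (0 < #|T|)%N -> 0 <= level_defect.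
Proof.
move=> T_gt0; apply: sumr_ge0 => t _; rewrite subr_ge0.
have level_t_neq0 := level_neq0 T_gt0 (ltn_ord t : (t <= maxdeg e)%N).
have := forest_degsum_in level_t_neq0; rewrite -card_gt0 in level_t_neq0; lia.
Qed.

Lemma level_defectE :
  level_defect = D + 2 * n - Q - 2 * Delta - 2 + deg_gap%:Z.
Proof.
have sum_card : \sum_(t < (maxdeg e).+1) #|level t|%:Z = D + n.
  rewrite -[LHS]Posz_sum sum_level_card Posz_sum.
  under eq_bigr do rewrite -addn1 PoszD.
  by rewrite big_split /= sumr_const card_xpredT natz.
have sum_degsum :
    \sum_(t < (maxdeg e).+1) (degsum_in (level t))%:Z = Q + D - deg_gap%:Z.
  apply/eqP; rewrite eq_sym subr_eq -[X in _ == X + _]Posz_sum -PoszD.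
  rewrite sum_level_degsum Posz_sum.
  rewrite -big_split; apply/eqP/eq_bigr => x _ /=.
  by rewrite PoszM -[(d x).+1]addn1 PoszD; ring.
rewrite /level_defect sumrB -mulr_sumr sumrB sum_card sum_degsum.
by rewrite sumr_const card_ord; ring.
Qed.

Lemma deg_spreadE : deg_spread = Delta * D - Delta * n + D - Q.
Proof.
transitivity (\sum_x (Delta * (d x)%:Z - Delta + (d x)%:Z - (d x)%:Z ^+ 2)).
  by apply: eq_bigr => x _; ring.
by rewrite !(sumrB, big_split) /= -mulr_sumr sumr_const card_xpredT; ring.
Qed.

Lemma deg_spread_ge0 : (1 < #|T|)%N -> 0 <= deg_spread.
Proof.
move=> T_gt1; apply: sumr_ge0 => x _.
have := deg_gt0 x T_gt1; have := deg_le_maxdeg x; nia.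
Qed.

Lemma deg_spread_gt0 x :
  (1 < #|T|)%N -> (1 < d x < maxdeg e)%N -> 0 < deg_spread.
Proof.
move=> T_gt1 mid_x; apply: (@psumr_gt0 _ _ _ _ x) => // [y _|].
  by have := deg_gt0 y T_gt1; have := deg_le_maxdeg y; nia.
by move: mid_x; nia.
Qed.

Lemma tree_sum_degz : (0 < #|T|)%N -> D = 2 * n - 2.
Proof. by move=> T_gt0; rewrite -Posz_sum tree_sum_deg //; lia. Qed.

Lemma sigma_tE : sigma_t e = n * Q - D ^+ 2.
Proof. exact: sum_pairs_sqr_diff. Qed.

Lemma sum_edges_sym (R : nmodType) (F : T -> T -> R) :
  \sum_x \sum_(y | e x y) F x y = \sum_x \sum_(y | e x y) F y x.
Proof.
rewrite (exchange_big_dep predT) //=.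
by apply: eq_bigr => x _; apply: eq_bigl => y; rewrite esym.
Qed.

Lemma sum_edges_const (f : T -> int) :
  \sum_x \sum_(y | e x y) f x = \sum_x f x * (d x)%:Z.
Proof.
by apply: eq_bigr => x _; rewrite sumr_const -cardsE -mulr_natr natz.
Qed.

Lemma sigma_sum_edges :
  sigma e *+ 2 = \sum_x \sum_(y | e x y) ((d x)%:Z - (d y)%:Z) ^+ 2.
Proof. by rewrite sum_sym_pairs // => x y; rewrite -sqrrN opprB. Qed.

Lemma deg_gap_sum_edges :
  deg_gap%:Z *+ 2 = \sum_x \sum_(y | e x y) `|(d x)%:Z - (d y)%:Z|.
Proof.
rewrite mulr2n {2}/deg_gap sum_edges_sym /deg_gap -PoszD -big_split Posz_sum.
apply: eq_bigr => x _; rewrite -big_split Posz_sum /=.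
by apply: eq_bigr => y _; lia.
Qed.

Lemma sigma_sub_deg_gap :
  (sigma e - deg_gap%:Z) *+ 2 =
  \sum_x \sum_(y | e x y)
     (((d x)%:Z - (d y)%:Z) ^+ 2 - `|(d x)%:Z - (d y)%:Z|).
Proof.
rewrite mulrnBl sigma_sum_edges deg_gap_sum_edges -sumrB.
by apply: eq_bigr => x _; rewrite sumrB.
Qed.

Lemma deg_gap_le_sigma : deg_gap%:Z <= sigma e.
Proof.
rewrite -subr_ge0 -(pmulrn_lge0 _ (isT : (0 < 2)%N)) sigma_sub_deg_gap.
by do 2![apply: sumr_ge0 => ? _]; rewrite subr_ge0 normz_le_sqr.
Qed.

Lemma deg_gap_lt_sigma u v :
  e u v -> (d v + 2 <= d u)%N -> deg_gap%:Z < sigma e.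
Proof.
move=> euv steep.
rewrite -subr_gt0 -(pmulrn_lgt0 _ (isT : (0 < 2)%N)) sigma_sub_deg_gap.
have sqr_sub_norm_ge0 (z : int) : 0 <= z ^+ 2 - `|z|.
  by rewrite subr_ge0 normz_le_sqr.
apply: (@psumr_gt0 _ _ _ _ u) => // [x _|]; first exact: sumr_ge0.
apply: (@psumr_gt0 _ _ _ _ v) => //; rewrite subr_gt0 normz_lt_sqr //.
by move: steep; lia.
Qed.

Lemma sigma_t_defect : (0 < #|T|)%N ->
  (n - 2) * sigma e - sigma_t e =
  (n - 2) * (sigma e - deg_gap%:Z) + (n - 2) * level_defect + 2 * deg_spread.
Proof.
move=> T_gt0; rewrite sigma_tE level_defectE deg_spreadE tree_sum_degz //.
ring.
Qed.

Section MaxdegLe2.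
Hypotheses (T_gt1 : (1 < #|T|)%N) (Delta_le2 : (maxdeg e <= 2)%N).

Lemma maxdeg_le2_deg x : d x = 1%N \/ d x = 2%N.
Proof.
have := deg_gt0 x T_gt1; have := leq_trans (deg_le_maxdeg x) Delta_le2; lia.
Qed.

Lemma maxdeg_le2_sigma_t : sigma_t e = 2 * (n - 2).
Proof.
rewrite sigma_tE; have -> : Q = \sum_x (3 * (d x)%:Z - 2).
  by apply: eq_bigr => x _; case: (maxdeg_le2_deg x) => ->.
rewrite sumrB -mulr_sumr sumr_const card_xpredT (tree_sum_degz (ltnW T_gt1)).
by rewrite -mulr_natr natz; ring.
Qed.

Lemma maxdeg_le2_sigma_le2 : sigma e <= 2.
Proof.
rewrite -(@ler_pMn2r _ 2 isT) sigma_sum_edges.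
apply: (@le_trans _ _
  (\sum_x \sum_(y | e x y) ((2 - (d x)%:Z) + (2 - (d y)%:Z)))).
  apply: ler_sum => x _; apply: ler_sum => y _.
  by case: (maxdeg_le2_deg x) => ->; case: (maxdeg_le2_deg y) => ->.
under eq_bigr do rewrite big_split /=.
rewrite big_split /= [X in _ + X]sum_edges_sym -mulr2n sum_edges_const.
have -> : \sum_x (2 - (d x)%:Z) * (d x)%:Z = \sum_x (2 - (d x)%:Z).
  by apply: eq_bigr => x _; case: (maxdeg_le2_deg x) => ->.
rewrite sumrB sumr_const card_xpredT (tree_sum_degz (ltnW T_gt1)).
by rewrite -mulr_natl natz ler_pMn2r //; lia.
Qed.

Lemma maxdeg_le2_sigma_ge : (n - 2) * sigma e <= sigma_t e.
Proof.
rewrite maxdeg_le2_sigma_t mulrC ler_wpM2r ?maxdeg_le2_sigma_le2 //.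
by rewrite subr_ge0 lez_nat.
Qed.

End MaxdegLe2.
End Graph.

Local Open Scope ring_scope.

Theorem theorem2 (T : finType) (e : rel T) :
  is_tree e -> (2 <= #|T|)%N ->
  [/\ sigma_t e <= (#|T|%:Z - 2) * sigma e,
      sigma_t e = (#|T|%:Z - 2) * sigma e <-> is_path_graph e
    & (3 <= maxdeg e)%N -> sigma_t e < (#|T|%:Z - 2) * sigma e].
Proof.
case=> [[esym eirr] [conn acyc]] T_gt1; have T_gt0 := ltnW T_gt1.
have n2_ge0 : 0 <= #|T|%:Z - 2 by rewrite subr_ge0 lez_nat.
have gap_ge0 : 0 <= sigma e - (deg_gap e)%:Z.
  by rewrite subr_ge0 deg_gap_le_sigma.
have level_ge0 := level_defect_ge0 esym eirr acyc T_gt0.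
have defect := sigma_t_defect esym eirr acyc conn T_gt0.
have le_sigma : sigma_t e <= (#|T|%:Z - 2) * sigma e.
  by rewrite -subr_ge0 defect !addr_ge0 ?mulr_ge0 ?deg_spread_ge0.
have lt_sigma : (3 <= maxdeg e)%N -> sigma_t e < (#|T|%:Z - 2) * sigma e.
  move=> Delta_ge3; rewrite -subr_gt0 defect.
  have [[x mid_x]|[u [v [euv steep]]]] :=
    tree_mid_deg_or_steep_edge esym eirr acyc conn T_gt1 Delta_ge3.
    have spread_gt0 := deg_spread_gt0 conn T_gt1 mid_x.
    by rewrite ltr_wpDl ?addr_ge0 ?mulr_ge0 ?pmulr_rgt0.
  have := maxdeg_lt_card eirr T_gt0; rewrite -ltz_nat => Delta_lt_n.
  have n2_gt0 : 0 < #|T|%:Z - 2 by lia.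
  rewrite -addrA ltr_pwDl ?addr_ge0 ?mulr_ge0 ?deg_spread_ge0 ?pmulr_rgt0 //.
  by rewrite subr_gt0 (deg_gap_lt_sigma esym eirr euv steep).
split=> //; split=> [eq_sigma|/path_graph_maxdeg_le2 Delta_le2].
  apply: tree_maxdeg_le2_path => //; rewrite leqNgt; apply/negP => /lt_sigma.
  by rewrite eq_sigma ltxx.
by apply/eqP; rewrite eq_le le_sigma maxdeg_le2_sigma_ge.
Qed.
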